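(* Under the standing assumptions of the setup, for every $(v,w)$ with $\nu(v,w)>0$, \[ \gamma_\ell(v,w)\le \mathbb{E}(Y^1-Y^0\mid V=v,W=w,E=1)\le \gamma_u(v,w), \] where \[ \gamma_\ell(v,w)=\max\left\{\frac{\mu_1(v)-\mu_0(v)-(b-a)(1-\nu(v,w))}{\nu(v,w)},\,a-b\right\},\qquad \gamma_u(v,w)=\min\left\{\frac{\mu_1(v)-\mu_0(v)-(a-b)(1-\nu(v,w))}{\nu(v,w)},\,b-a\right\}. \]
   Context: Setup: there are random variables $V$ (covariates, discrete or continuous), $W$ (covariates taking finitely many values), a population indicator $E\in\{0,1\}$ ($E=1$: study population, $E=0$: target population), a treatment $A\in\{0,1\}$, potential outcomes $Y^1,Y^0\in[a,b]$ almost surely for known constants $a<b$, and observed outcome $Y=Y^A$ (consistency). In the study population ($E=1$) treatment is unconfounded given $V$: $A\perp\!\!\!\perp (Y^0,Y^1)\mid V,E=1$. Positivity: $\mathbb{P}(A=a'\mid V=v,W=w)>0$ for $a'\in\{0,1\}$ and all $(v,w)$. Transport assumptions: (1) $\mathbb{P}(W=w\mid V=v,E=1)=\mathbb{P}(W=w\mid V=v,E=0)$ for all $v,w$; (2) $\mathbb{E}(Y^1-Y^0\mid V,W,E=1)=\mathbb{E}(Y^1-Y^0\mid V,W,E=0)$. Notation: $\mu_{a'}(v)=\mathbb{E}(Y\mid V=v,A=a',E=1)$ for $a'\in\{0,1\}$, and $\nu(v,w)=\mathbb{P}(W=w\mid V=v,E=0)$. *)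

From HB Require Import structures.
From mathcomp Require Import all_boot all_order all_algebra.
From mathcomp Require Import all_classical all_reals all_analysis.
Set Implicit Arguments. Unset Strict Implicit. Unset Printing Implicit Defensive.
Import Order.TTheory GRing.Theory Num.Theory.
Local Open Scope classical_set_scope.
Local Open Scope ring_scope.

(* Elementary conditional probability P(B | C) = P(B /\ C) / P(C)
   (real-valued; the value is 0 when P(C) = 0, callers guard with P(C) > 0). *)
Definition cprob d (T : measurableType d) (R : realType) (P : probability T R)
  (B C : set T) : R := fine (P (B `&` C)) / fine (P C).

Definition cexp d (T : measurableType d) (R : realType) (P : probability T R)
  (X : T -> R) (C : set T) : R := Rintegral P C X / fine (P C).

(* Observed outcome under consistency: Y = Y^A. *)
Definition Yobs (T : Type) (R : realType) (A : T -> bool) (Y0 Y1 : T -> R) : T -> R :=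
  fun t => if A t then Y1 t else Y0 t.

Definition evb (T : Type) (X : T -> bool) (x : bool) : set T := [set t | X t = x].
Definition evw (T : Type) (TW : Type) (W : T -> TW) (w : TW) : set T := [set t | W t = w].

(* mu_{a'}(v) = E(Y | V = v, A = a', E = 1), computed in the conditional law Pv given V = v *)
Definition mu_ d (T : measurableType d) (R : realType) (Pv : probability T R)
  (E A : T -> bool) (Y0 Y1 : T -> R) (a' : bool) : R :=
  cexp Pv (Yobs A Y0 Y1) (evb A a' `&` evb E true).

Definition nu_ d (T : measurableType d) (R : realType) (TW : Type) (Pv : probability T R)
  (E : T -> bool) (W : T -> TW) (w : TW) : R :=
  cprob Pv (evw W w) (evb E false).

From HB Require Import structures.
From mathcomp Require Import all_boot all_order all_algebra.
From mathcomp Require Import all_classical all_reals all_analysis.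
From mathcomp Require Import measurable_realfun ring lra.
Set Implicit Arguments. Unset Strict Implicit. Unset Printing Implicit Defensive.
Import Order.TTheory GRing.Theory Num.Theory.
Local Open Scope classical_set_scope.
Local Open Scope ring_scope.

(* Unconfoundedness identifies the study-population contrast mu_1 - mu_0 with
   E(Y^1 - Y^0 | E = 1), and transport assumption (1) identifies nu with
   P(W = w | E = 1).  Splitting {E = 1} along {W = w} gives
   mu_1 - mu_0 = nu tau + (1 - nu) tau', where tau' is the effect on
   {W <> w, E = 1}; as Y^1 - Y^0 lies in [a - b, b - a], so do tau and tau', and
   solving for tau yields the two bounds. *)

Section bounded_integrals.
Context d (T : measurableType d) (R : realType) (Q : probability T R).
Implicit Types (S : set T) (f : T -> R) (lo hi : R).

Lemma integrable_bounded S f lo hi : measurable S -> measurable_fun setT f ->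
  (forall t, lo <= f t <= hi) -> Q.-integrable S (EFin \o f).
Proof.
move=> mS mf fb; apply: measurable_bounded_integrable => //.
- by rewrite -ge0_fin_numE ?measure_ge0// fin_num_measure.
- exact: measurable_funTS.
rewrite /bounded_near; near=> M => t _ /=.
apply: le_trans (_ : `|lo| + `|hi| <= M).
  have /andP[flo fhi] := fb t.
  have := normr_ge0 lo; have := normr_ge0 hi.
  have := ler_norm hi; have := ler_norm (- lo); rewrite normrN ler_norml.
  by move=> *; apply/andP; split; lra.
by near: M; apply: nbhs_pinfty_ge; rewrite num_real.
Unshelve. all: by end_near.
Qed.

Lemma Rintegral_bounds S f lo hi : measurable S -> measurable_fun setT f ->
  (forall t, lo <= f t <= hi) ->
  lo * fine (Q S) <= \int[Q]_(x in S) f x <= hi * fine (Q S).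
Proof.
move=> mS mf fb; have intf := integrable_bounded mS mf fb.
have intc c := finite_measure_integrable_cst Q c mS.
rewrite -!Rintegral_cst//; apply/andP; split; apply: le_Rintegral => //;
  try exact: intc; by move=> t _; have /andP[] := fb t.
Qed.

Lemma le_fine_measure S1 S2 : measurable S1 -> measurable S2 ->
  S1 `<=` S2 -> fine (Q S1) <= fine (Q S2).
Proof.
move=> mS1 mS2 S12; apply: fine_le; rewrite ?fin_num_measure//.
by apply: le_measure; rewrite ?inE.
Qed.

Lemma preimage_patch_outside S (Z : T -> R) lo (A : set R) :
  A `<=` [set y | lo <= y] ->
  patch (cst (lo - 1)) S Z @^-1` A = S `&` Z @^-1` A.
Proof.
move=> Alo; apply/seteqP; split => t /=; rewrite /patch.
  by case: ifPn => [/set_mem tS|_ /Alo/=]; [split|lra].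
by case=> /mem_set ->.
Qed.

Lemma measurable_patch_cst S (Z : T -> R) c :
  measurable S -> measurable_fun setT Z ->
  measurable_fun setT (patch (cst c) S Z).
Proof.
move=> mS mZ; apply: measurable_fun_ifT => //.
apply: (measurable_fun_bool true).
rewrite setTI (_ : _ @^-1` _ = S)//.
by apply/seteqP; split=> t /=; [move/set_mem|move/mem_set].
Qed.

(* Sending the complement of S below lo turns an integral over S into one
   against a pushforward law on [lo, hi]; conditional laws of Z can then be
   compared as measures. *)
Lemma integral_patch_pushforward S (Z : T -> R) lo hi (f : R -> R) :
  measurable S -> measurable_fun setT Z -> (forall t, lo <= Z t <= hi) ->
  measurable_fun `[lo, hi] f -> (forall y, lo <= y <= hi -> 0 <= f y) ->
  (\int[Q]_(x in S) (f (Z x))%:E =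
   \int[pushforward Q (patch (cst (lo - 1)%R) S Z)]_(y in `[lo, hi]) (f y)%:E)%E.
Proof.
move=> mS mZ Zb mf f0.
have mpatch := measurable_patch_cst (lo - 1) mS mZ.
rewrite (ge0_integral_pushforward mpatch)//; last 2 first.
- exact/measurable_EFinP.
- by move=> y /[!inE]/= /[!in_itv]/= /f0; rewrite lee_fin.
rewrite preimage_patch_outside; last first.
  by move=> y /=; rewrite in_itv/= => /andP[].
rewrite (_ : Z @^-1` _ = setT) ?setIT; last first.
  by apply/seteqP; split=> t //= _; rewrite in_itv/= Zb.
by apply: eq_integral => t /[!inE] tS /=; rewrite /patch mem_set.
Qed.

Lemma Rintegral_proportional G F (Z : T -> R) lo hi c :
  measurable G -> measurable F -> measurable_fun setT Z ->
  (forall t, lo <= Z t <= hi) -> 0 <= c ->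
  (forall B, measurable B ->
     Q (G `&` Z @^-1` B) = (c%:E * Q (F `&` Z @^-1` B))%E) ->
  \int[Q]_(x in G) Z x = c * \int[Q]_(x in F) Z x.
Proof.
move=> mG mF mZ Zb c0 GF.
have mshift : measurable_fun `[lo, hi] (fun y => y - lo).
  exact: measurable_funB.
have shift0 y : lo <= y <= hi -> 0 <= y - lo.
  by case/andP => ? _; rewrite subr_ge0.
have shifted : (\int[Q]_(x in G) (Z x - lo)%:E =
                c%:E * \int[Q]_(x in F) (Z x - lo)%:E)%E.
  rewrite (integral_patch_pushforward mG mZ Zb mshift shift0).
  rewrite (integral_patch_pushforward mF mZ Zb mshift shift0).
  rewrite -[c]/((NngNum c0)%:num) -ge0_integral_mscale//.
  - exact: measurable_patch_cst.
  - move=> mpatchF; apply: eq_measure_integral.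
      exact: measurable_patch_cst.
    move=> _ B mB Blohi /=.
    have Blo : B `<=` [set y | lo <= y].
      by move=> y /Blohi /=; rewrite in_itv/= => /andP[].
    rewrite /pushforward preimage_patch_outside//.
    by rewrite (GF _ mB) /mscale /= /pushforward preimage_patch_outside.
  - exact: (measurable_EFinP _ _).2 mshift.
have mZlo : measurable_fun setT (fun t => Z t - lo) by exact: measurable_funB.
have Zlo t : 0 <= Z t - lo <= hi - lo.
  by have /andP[? ?] := Zb t; apply/andP; split; lra.
have QG : fine (Q G) = c * fine (Q F).
  have := GF setT measurableT; rewrite !preimage_setT !setIT => ->.
  by rewrite fineM// fin_num_measure.
have recenter S : measurable S ->
    \int[Q]_(x in S) Z x = \int[Q]_(x in S) (Z x - lo) + lo * fine (Q S).
  move=> mS; rewrite RintegralB ?Rintegral_cst ?subrK//.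
  - exact: integrable_bounded mS mZ Zb.
  - exact: finite_measure_integrable_cst.
rewrite !recenter// {1}/Rintegral shifted fineM//; last first.
  by apply: integrable_fin_num => //; exact: integrable_bounded mF mZlo Zlo.
by rewrite QG -/(Rintegral _ _ _) mulrDr mulrCA.
Qed.
End bounded_integrals.

Section clamp.
Context (R : realType) (a b : R).

Definition clamp (y : R) : R := Num.min (Num.max y a) b.

Lemma measurable_clamp : measurable_fun setT clamp.
Proof.
apply: measurable_minr; last exact: measurable_cst.
by apply: measurable_maxr; [exact: measurable_id | exact: measurable_cst].
Qed.

Lemma clamp_itv y : a <= b -> a <= clamp y <= b.
Proof. by move=> ab; rewrite /clamp le_min ge_min le_max !lexx ab !orbT. Qed.

Lemma ae_eq_clamp d (T : measurableType d) (Q : probability T R) (Y : T -> R) :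
  {ae Q, forall t, a <= Y t <= b} -> {ae Q, forall t, Y t = clamp (Y t)}.
Proof.
by apply: filterS => t /andP[ay yb]; rewrite /clamp max_l// min_l.
Qed.

End clamp.

Lemma mixture_component_bounds (R : realFieldType) (lo hi Jw Jr qw qr : R) :
  0 < qw -> 0 <= qr -> lo * qw <= Jw <= hi * qw -> lo * qr <= Jr <= hi * qr ->
  let M := (Jw + Jr) / (qw + qr) in let nu := qw / (qw + qr) in
  Num.max ((M - hi * (1 - nu)) / nu) lo <= Jw / qw /\
  Jw / qw <= Num.min ((M - lo * (1 - nu)) / nu) hi.
Proof.
move=> qw0 qr0 /andP[w1 w2] /andP[r1 r2] M nu.
have qn : qw + qr != 0 by rewrite gt_eqF// ltr_wpDr.
have qwn : qw != 0 by rewrite gt_eqF.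
have -> : (M - hi * (1 - nu)) / nu = (Jw + Jr - hi * qr) / qw.
  by rewrite /M /nu; field; rewrite qn qwn.
have -> : (M - lo * (1 - nu)) / nu = (Jw + Jr - lo * qr) / qw.
  by rewrite /M /nu; field; rewrite qn qwn.
rewrite ge_max le_min; split; apply/andP; split.
- by rewrite ler_pM2r ?invr_gt0//; lra.
- by rewrite ler_pdivlMr//; lra.
- by rewrite ler_pM2r ?invr_gt0//; lra.
- by rewrite ler_pdivrMr//; lra.
Qed.

Section conditional_expectation.
Context d (T : measurableType d) (R : realType) (Q : probability T R).
Implicit Types (F G S : set T) (f g X Z : T -> R) (lo hi : R).

Lemma cexp_ae_eq S f g : measurable S ->
  measurable_fun setT f -> measurable_fun setT g ->
  {ae Q, forall t, f t = g t} -> cexp Q f S = cexp Q g S.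
Proof.
move=> mS mf mg fg; rewrite /cexp /Rintegral; congr (fine _ / _).
apply: ae_eq_integral => //.
- exact/measurable_EFinP/measurable_funTS.
- exact/measurable_EFinP/measurable_funTS.
by apply: filterS fg => t /= -> _.
Qed.

Lemma cexpB S f g : measurable S ->
  Q.-integrable S (EFin \o f) -> Q.-integrable S (EFin \o g) ->
  cexp Q (fun t => f t - g t) S = cexp Q f S - cexp Q g S.
Proof. by move=> mS intf intg; rewrite /cexp RintegralB// mulrBl. Qed.

Lemma cexp_indep G F Z lo hi : measurable G -> measurable F ->
  measurable_fun setT Z -> (forall t, lo <= Z t <= hi) ->
  (forall B, measurable B ->
     cprob Q (G `&` Z @^-1` B) F = cprob Q G F * cprob Q (Z @^-1` B) F) ->
  0 < fine (Q (G `&` F)) -> cexp Q Z (G `&` F) = cexp Q Z F.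
Proof.
move=> mG mF mZ Zb indep qGF0.
have finQ S : measurable S -> Q S = (fine (Q S))%:E.
  by move=> mS; rewrite fineK// fin_num_measure.
have qF0 : 0 < fine (Q F).
  apply: lt_le_trans qGF0 _; apply: le_fine_measure => //.
  exact: measurableI.
have c0 : 0 <= cprob Q G F by rewrite divr_ge0// fine_ge0// measure_ge0.
have mZB B : measurable B -> measurable (Z @^-1` B).
  by move=> mB; rewrite -[_ @^-1` _]setTI; exact: mZ.
have GF B : measurable B -> Q (G `&` F `&` Z @^-1` B) =
    ((cprob Q G F)%:E * Q (F `&` Z @^-1` B))%E.
  move=> mB; rewrite setIAC (setIC F).
  have mZBF : measurable (Z @^-1` B `&` F).
    by apply: measurableI => //; exact: mZB.
  have mGZBF : measurable (G `&` Z @^-1` B `&` F).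
    by rewrite -setIA; apply: measurableI.
  rewrite (finQ _ mZBF) (finQ _ mGZBF) -EFinM.
  congr EFin.
  rewrite -[LHS](@divfK _ (fine (Q F))) ?gt_eqF//.
  by have := indep B mB; rewrite /cprob => ->; field; rewrite gt_eqF.
rewrite /cexp (Rintegral_proportional (measurableI _ _ mG mF) mF mZ Zb c0 GF).
by rewrite /cprob; field; rewrite !gt_eqF.
Qed.

Lemma cexp_bounds_mixture G F X lo hi :
  measurable G -> measurable F -> measurable_fun setT X -> lo <= hi ->
  {ae Q, forall t, lo <= X t <= hi} -> 0 < cprob Q G F ->
  let nu := cprob Q G F in
  Num.max ((cexp Q X F - hi * (1 - nu)) / nu) lo <= cexp Q X (G `&` F) /\
  cexp Q X (G `&` F) <= Num.min ((cexp Q X F - lo * (1 - nu)) / nu) hi.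
Proof.
move=> mG mF mX lohi aeXb nu0 nu.
have mGF : measurable (G `&` F) by exact: measurableI.
have mX' : measurable_fun setT (clamp lo hi \o X).
  exact: measurableT_comp (measurable_clamp lo hi) mX.
have Xb t : lo <= clamp lo hi (X t) <= hi by exact: clamp_itv.
rewrite !(cexp_ae_eq _ mX mX' (ae_eq_clamp aeXb))//.
have mNGF : measurable (~` G `&` F).
  by apply: measurableI => //; exact: measurableC.
have splitF : F = (G `&` F) `|` (~` G `&` F) by rewrite -setIUl setUCr setTI.
have disj : (G `&` F) `&` (~` G `&` F) = set0 by rewrite setIACA setICr set0I.
have QF : fine (Q F) = fine (Q (G `&` F)) + fine (Q (~` G `&` F)).
  by rewrite {1}splitF measureU// fineD// fin_num_measure.
have IF : \int[Q]_(x in F) clamp lo hi (X x) =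
    \int[Q]_(x in G `&` F) clamp lo hi (X x) +
    \int[Q]_(x in ~` G `&` F) clamp lo hi (X x).
  rewrite {1}splitF Rintegral_setU// -?splitF; last exact/eqP.
  exact: integrable_bounded mF mX' Xb.
have qGF0 : 0 < fine (Q (G `&` F)).
  move: nu0; rewrite /cprob lt0r mulf_eq0 negb_or => /andP[/andP[+ _] _].
  by rewrite lt0r => -> /=; rewrite fine_ge0// measure_ge0.
rewrite /nu /cexp /cprob QF IF.
apply: mixture_component_bounds => //.
- by rewrite fine_ge0// measure_ge0.
- exact: Rintegral_bounds.
- exact: Rintegral_bounds.
Qed.

End conditional_expectation.

Definition unconfounded (R : realType) d (T : measurableType d)
    (Q : probability T R) (E A : T -> bool) (Y0 Y1 : T -> R) : Prop :=
  forall (S : set (R * R)%type), measurable S -> forall a' : bool,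
    cprob Q (evb A a' `&` [set t | S (Y0 t, Y1 t)]) (evb E true)
    = cprob Q (evb A a') (evb E true)
      * cprob Q [set t | S (Y0 t, Y1 t)] (evb E true).

Section study_population.
Context (R : realType) d (T : measurableType d) (Q : probability T R).
Context (E A : T -> bool) (Y0 Y1 : T -> R) (a b : R).
Hypotheses (ab : a <= b) (mF : measurable (evb E true))
  (mA : forall a', measurable (evb A a'))
  (mY0 : measurable_fun setT Y0) (mY1 : measurable_fun setT Y1)
  (aeY0 : {ae Q, forall t, a <= Y0 t <= b})
  (aeY1 : {ae Q, forall t, a <= Y1 t <= b})
  (unconf : unconfounded Q E A Y0 Y1).

Lemma mu_eq_cexp_potential (a' : bool) :
  0 < fine (Q (evb A a' `&` evb E true)) ->
  mu_ Q E A Y0 Y1 a' = cexp Q (if a' then Y1 else Y0) (evb E true).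
Proof.
move=> qAF0.
pose Ya := if a' then Y1 else Y0.
have mYa : measurable_fun setT Ya by rewrite /Ya; case: (a').
have aeYa : {ae Q, forall t, a <= Ya t <= b} by rewrite /Ya; case: (a').
have mZa : measurable_fun setT (clamp a b \o Ya).
  exact: measurableT_comp (measurable_clamp a b) mYa.
have YZ := ae_eq_clamp aeYa.
have -> : mu_ Q E A Y0 Y1 a' = cexp Q Ya (evb A a' `&` evb E true).
  rewrite /mu_ /cexp; congr (_ / _); apply: eq_Rintegral => t /[!inE] -[At _].
  by rewrite /Yobs At /Ya; case: (a').
rewrite -/Ya !(cexp_ae_eq _ mYa mZa YZ)//; last exact: measurableI.
apply: cexp_indep => // [t|B mB]; first exact: clamp_itv.
pose S := [set p : R * R | B (clamp a b (if a' then p.2 else p.1))].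
have mS : measurable S.
  rewrite -[S]setTI; apply: (measurableT_comp (measurable_clamp a b)) => //.
  by case: (a'); [exact: measurable_snd | exact: measurable_fst].
by have := unconf mS a'; rewrite /S /Ya; case: (a').
Qed.

Lemma mu_contrast : (forall a', 0 < fine (Q (evb A a' `&` evb E true))) ->
  mu_ Q E A Y0 Y1 true - mu_ Q E A Y0 Y1 false =
  cexp Q (fun t => Y1 t - Y0 t) (evb E true).
Proof.
move=> qAF0; have mu_E a' := mu_eq_cexp_potential (qAF0 a').
pose Z0 := clamp a b \o Y0; pose Z1 := clamp a b \o Y1.
have mZ0 : measurable_fun setT Z0 := measurableT_comp (measurable_clamp _ _) mY0.
have mZ1 : measurable_fun setT Z1 := measurableT_comp (measurable_clamp _ _) mY1.
have YZ0 := ae_eq_clamp aeY0; have YZ1 := ae_eq_clamp aeY1.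
have ae10 : {ae Q, forall t, Y1 t - Y0 t = Z1 t - Z0 t}.
  by apply: filterS2 YZ0 YZ1 => t -> ->.
rewrite !mu_E /= (cexp_ae_eq _ mY1 mZ1 YZ1)// (cexp_ae_eq _ mY0 mZ0 YZ0)//.
have Zb t : a <= clamp a b t <= b := clamp_itv t ab.
rewrite (cexp_ae_eq _ _ _ ae10)// ?cexpB//.
- exact: integrable_bounded mF mZ1 (fun t => Zb (Y1 t)).
- exact: integrable_bounded mF mZ0 (fun t => Zb (Y0 t)).
- exact: measurable_funB.
- exact: measurable_funB.
Qed.

End study_population.

(* P v is the conditional law of (W, E, A, Y0, Y1) given V = v. *)
Theorem theorem1 (R : realType) (d : measure_display) (T : measurableType d)
  (TV : Type) (TW : finType) (P : TV -> probability T R)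
  (W : T -> TW) (E A : T -> bool) (Y0 Y1 : T -> R) (a b : R) :
  a < b ->
  (forall w, measurable (evw W w)) ->
  (forall x, measurable (evb E x)) ->
  (forall x, measurable (evb A x)) ->
  measurable_fun setT Y0 -> measurable_fun setT Y1 ->
  (forall v, {ae P v, forall t, a <= Y0 t <= b}) ->
  (forall v, {ae P v, forall t, a <= Y1 t <= b}) ->
  (* unconfoundedness: A indep. of (Y0, Y1) given V, E = 1 *)
  (forall v (S : set (R * R)%type), measurable S -> forall a' : bool,
     cprob (P v) (evb A a' `&` [set t | S (Y0 t, Y1 t)]) (evb E true)
     = cprob (P v) (evb A a') (evb E true)
       * cprob (P v) [set t | S (Y0 t, Y1 t)] (evb E true)) ->
  (* positivity *)
  (forall v w (a' : bool), 0 < fine (P v (evw W w)) ->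
     0 < cprob (P v) (evb A a') (evw W w)) ->
  (* transport assumption (1) *)
  (forall v w, 0 < fine (P v (evb E true)) -> 0 < fine (P v (evb E false)) ->
     cprob (P v) (evw W w) (evb E true) = cprob (P v) (evw W w) (evb E false)) ->
  (* transport assumption (2) *)
  (forall v w, 0 < fine (P v (evw W w `&` evb E true)) ->
     0 < fine (P v (evw W w `&` evb E false)) ->
     cexp (P v) (fun t => Y1 t - Y0 t) (evw W w `&` evb E true)
     = cexp (P v) (fun t => Y1 t - Y0 t) (evw W w `&` evb E false)) ->
  forall (v : TV) (w : TW),
    (* well-definedness of mu_1(v), mu_0(v), nu(v,w) *)
    (forall a' : bool, 0 < fine (P v (evb A a' `&` evb E true))) ->
    0 < fine (P v (evb E false)) ->
    0 < nu_ (P v) E W w ->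
    let mu1 := mu_ (P v) E A Y0 Y1 true in
    let mu0 := mu_ (P v) E A Y0 Y1 false in
    let nu := nu_ (P v) E W w in
    let tau := cexp (P v) (fun t => Y1 t - Y0 t) (evw W w `&` evb E true) in
    Num.max ((mu1 - mu0 - (b - a) * (1 - nu)) / nu) (a - b) <= tau /\
    tau <= Num.min ((mu1 - mu0 - (a - b) * (1 - nu)) / nu) (b - a).
Proof.
move=> ab mW mE mA mY0 mY1 aeY0 aeY1 unconf _ transport _ v w qAF0 qE0 nu0.
move=> mu1 mu0 nu tau; rewrite {}/mu1 {}/mu0 {}/nu {}/tau.
set Q := P v; set F := evb E true; have mF : measurable F := mE true.
have qF0 : 0 < fine (Q F).
  apply: lt_le_trans (qAF0 true) _; apply: le_fine_measure => //.
  exact: measurableI.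
have nuE : nu_ Q E W w = cprob Q (evw W w) F by rewrite /nu_ -transport.
rewrite (mu_contrast (ltW ab) mF mA mY0 mY1 (aeY0 v) (aeY1 v) (unconf v) qAF0).
rewrite nuE.
apply: cexp_bounds_mixture => //; last by rewrite -nuE.
- exact: measurable_funB.
- lra.
apply: filterS2 (aeY0 v) (aeY1 v) => t /andP[? ?] /andP[? ?].
by apply/andP; split; lra.
Qed.
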